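(* Let $T_1=\{12|345,\,123|45\}$, $T_2=\{13|245,\,134|25\}$, $T_3=\{123|45,\,13|245\}$ be binary trees on leaves $\{1,\dots,5\}$. Under the JC model, $V_{T_3}\subseteq V_{T_1}\ast V_{T_2}$.
   Context: Trees are unrooted binary trees described by their nontrivial splits; $\Sigma(T)$ is the set of all splits of $T$ including trivial ones. With $G=\mathbb{Z}_2\times\mathbb{Z}_2$ and $A=(0,0)$, $C=(0,1)$, $G=(1,0)$, $T=(1,1)$, the JC model on $T$ in Fourier coordinates $q_{g_1\cdots g_5}$ is $q_{g_1\cdots g_5}=\prod_{A|B\in\Sigma(T)}a^{A|B}_{\sum_{i\in A}g_i}$ if $\sum g_i=0$ and $0$ otherwise, with $a^e_C=a^e_G=a^e_T$ for all splits $e$. $V_T\subseteq\mathbb{P}^{4^5-1}$ is the Zariski closure of the image as parameters range over complex numbers; $V\ast W$ is the join: the Zariski closure of the union of all lines meeting both $V$ and $W$. *)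

From mathcomp Require Import all_boot all_order all_algebra.
From mathcomp Require Import Rstruct complex mpoly.

Set Implicit Arguments.
Unset Strict Implicit.
Unset Printing Implicit Defensive.

Import GRing.Theory.
Local Open Scope ring_scope.

Notation CC := (Rdefinitions.R)[i].

Notation grp := ('Z_2 * 'Z_2)%type.
Definition nuA : grp := (0, 0).
Definition nuC : grp := (0, 1).
Definition nuG : grp := (1, 0).
Definition nuT : grp := (1, 1).

(* Leaves 1..5 are 'I_5 = {0,..,4} (leaf i is the ordinal i-1). *)
Definition leaf := 'I_5.

(* Labellings (g_1,...,g_5) in G^5: they index the 4^5 Fourier coordinates. *)
Definition labelling := {ffun leaf -> grp}.

(* Points of the affine space C^(4^5), i.e. of the affine cone over
   P^(4^5 - 1): a coordinate q_{g_1...g_5} for each labelling. *)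
Definition point := {ffun labelling -> CC}.

(* A split A|B of the leaf set is represented by one of its sides A.
   A tree is given by the list of its nontrivial splits; Sigma(T) adds
   the trivial (leaf) splits {i}|rest. *)
Definition split := {set leaf}.
Definition tree := seq split.
Definition Sigma (T : tree) : seq split := T ++ [seq [set i] | i <- enum 'I_5].

Definition JC_params (a : split -> grp -> CC) : Prop :=
  forall e, a e nuC = a e nuG /\ a e nuG = a e nuT.

(* The Fourier parametrization q_{g_1..g_5}.  Note that when sum_i g_i = 0,
   the sum over A equals the sum over B, so the side chosen is irrelevant. *)
Definition JC_map (T : tree) (a : split -> grp -> CC) : point :=
  [ffun g : labelling =>
     if \sum_(i : leaf) g i == 0
     then \prod_(e <- Sigma T) a e (\sum_(i in e) g i)
     else 0].

Definition nvars : nat := #|{: labelling}|.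
Definition coord_poly := {mpoly CC[nvars]}.
Definition peval (p : coord_poly) (x : point) : CC :=
  p.@[fun i : 'I_nvars => x (enum_val i)].
Definition homogeneous (p : coord_poly) : Prop := exists d : nat, p \is d.-homog.

(* Projective points are represented by nonzero vectors (their affine
   representatives).  A set of projective points is a predicate on
   vectors, only its nonzero members count.
   Zariski closure in P^(4^5-1): x lies in the closure of S iff every
   homogeneous polynomial vanishing on (the nonzero points of) S vanishes at x. *)
Definition proj_closure (S : point -> Prop) : point -> Prop :=
  fun x => x != 0 /\
    forall p : coord_poly, homogeneous p ->
      (forall y, S y -> y != 0 -> peval p y = 0) -> peval p x = 0.

Definition V (T : tree) : point -> Prop :=
  proj_closure (fun x => exists a, JC_params a /\ x = JC_map T a).

(* Union of all lines meeting V and W: the line through two distinct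
   projective points [u] in V, [v] in W is {[s u + t v] : (s,t) <> (0,0)}. *)
Definition lines_union (Vs Ws : point -> Prop) : point -> Prop :=
  fun x => exists (u v : point) (s t : CC),
    [/\ Vs u /\ Ws v, u != 0 /\ v != 0,
        (forall c : CC, v != c *: u) & x = s *: u + t *: v].

Definition join (Vs Ws : point -> Prop) : point -> Prop :=
  proj_closure (lines_union Vs Ws).

Definition l1 : leaf := @Ordinal 5 0 isT.
Definition l2 : leaf := @Ordinal 5 1 isT.
Definition l3 : leaf := @Ordinal 5 2 isT.
Definition l4 : leaf := @Ordinal 5 3 isT.
Definition l5 : leaf := @Ordinal 5 4 isT.

Definition T1 : tree := [:: [set l1; l2]; [set l1; l2; l3]].
Definition T2 : tree := [:: [set l1; l3]; [set l1; l3; l4]].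
Definition T3 : tree := [:: [set l1; l2; l3]; [set l1; l3]].

(* Write a_e(h) = a_e(C) + [h = 0] (a_e(A) - a_e(C)) for the split e = 13|245 of
   T3 = {123|45, 13|245}.  The term a_e(C) is a parameter independent of the
   labelling, so that summand is a JC point of T1, in which 13|245 is replaced
   by 12|345.  In the other summand g_1 + g_3 = 0 forces g_1 + g_2 + g_3 = g_2,
   so the factor of 123|45 can be absorbed into the leaf parameter of 2, which
   gives a JC point of T2.  Every point of the parametrization of V_T3 is thus
   a sum u + v of points of V_T1 and V_T2 (or zero); since each V_T contains
   two distinct projective points, u + v always lies on a line meeting both. *)

From Pilot Require Import Defs.
From mathcomp Require Import all_boot all_order all_algebra.
From mathcomp Require Import Rstruct complex mpoly.
From mathcomp Require Import ring.
From Stdlib Require Import Classical_Prop.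

Set Implicit Arguments.
Unset Strict Implicit.
Unset Printing Implicit Defensive.

Import GRing.Theory.
Local Open Scope ring_scope.

Section TwoPoints.

Variables (K : fieldType) (E : lmodType K).

Definition has_two_points (S : E -> Prop) : Prop :=
  exists w1 w2, [/\ S w1, S w2, w1 != 0 & forall c : K, w2 != c *: w1].

Lemma has_two_points_nonmultiple (S : E -> Prop) (u : E) :
  has_two_points S -> exists w, [/\ S w, w != 0 & forall c, w != c *: u].
Proof.
case=> w1 [w2 [Sw1 Sw2 w1_neq0 w12]].
have w2_neq0 : w2 != 0 by have := w12 0; rewrite scale0r.
have [[c1 w1u] | not_w1u] := classic (exists c, w1 = c *: u); last first.
  by exists w1; split=> // c; apply/eqP => w1u; apply: not_w1u; exists c.
exists w2; split=> // c; apply/eqP => w2u.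
have c1_neq0 : c1 != 0 by apply: contraNneq w1_neq0 => c1_0; rewrite w1u c1_0 scale0r.
by move/eqP: (w12 (c / c1)); apply; rewrite w2u w1u scalerA divfK.
Qed.

Lemma has_two_points_nondivisor (S : E -> Prop) (v : E) : v != 0 ->
  has_two_points S -> exists w, [/\ S w, w != 0 & forall c, v != c *: w].
Proof.
move=> v_neq0 [w1 [w2 [Sw1 Sw2 w1_neq0 w12]]].
have w2_neq0 : w2 != 0 by have := w12 0; rewrite scale0r.
have [[c2 vw2] | not_vw2] := classic (exists c, v = c *: w2); last first.
  by exists w2; split=> // c; apply/eqP => vw2; apply: not_vw2; exists c.
exists w1; split=> // c; apply/eqP => vw1.
have c2_neq0 : c2 != 0 by apply: contraNneq v_neq0 => c2_0; rewrite vw2 c2_0 scale0r.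
move/eqP: (w12 (c2^-1 * c)); apply.
by rewrite -scalerA -vw1 vw2 scalerA mulVf // scale1r.
Qed.

End TwoPoints.

Lemma lines_union_add (Vs Ws : point -> Prop) (u v : point) :
  has_two_points Vs -> has_two_points Ws ->
  (u != 0 -> Vs u) -> (v != 0 -> Ws v) -> u + v != 0 ->
  lines_union Vs Ws (u + v).
Proof.
move=> Vs2 Ws2 Vu Wv uv_neq0.
have [u0 | u_neq0] := eqVneq u 0.
  have v_neq0 : v != 0 by rewrite u0 add0r in uv_neq0.
  have [w [Vw w_neq0 vw]] := has_two_points_nondivisor v_neq0 Vs2.
  by exists w, v, 0, 1; rewrite u0 scale0r scale1r !add0r; split; auto.
have [[c vu] | not_vu] := classic (exists c, v = c *: u).
  have [w [Ww w_neq0 wu]] := has_two_points_nonmultiple u Ws2.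
  by exists u, w, (1 + c), 0; rewrite scale0r addr0 scalerDl scale1r vu; split; auto.
have v_neq0 : v != 0.
  by apply: contra_not_neq not_vu => v0; exists 0; rewrite v0 scale0r.
exists u, v, 1, 1; rewrite !scale1r; split; auto.
by move=> c; apply/eqP => vu; apply: not_vu; exists c.
Qed.

Lemma mem_proj_closure (S : point -> Prop) (x : point) :
  S x -> x != 0 -> proj_closure S x.
Proof. by move=> Sx x_neq0; split=> // p _; apply. Qed.

Lemma proj_closure_trans (S S' : point -> Prop) (x : point) :
  (forall y, S y -> y != 0 -> proj_closure S' y) ->
  proj_closure S x -> proj_closure S' x.
Proof.
move=> SS' [x_neq0 clS]; split=> // p hom_p p_S'.
by apply: clS => // y Sy y_neq0; case: (SS' y Sy y_neq0) => _; apply.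
Qed.

Lemma V_JC_map (T : tree) (a : Defs.split -> grp -> CC) :
  JC_params a -> JC_map T a != 0 -> V T (JC_map T a).
Proof. by move=> ja; apply: mem_proj_closure; exists a. Qed.

Definition unit_params : Defs.split -> grp -> CC := fun _ _ => 1.
Definition delta0_params : Defs.split -> grp -> CC := fun _ h => (h == 0)%:R.

Definition labelling0 : labelling := [ffun => 0].
Definition labelling_CCAAA : labelling :=
  [ffun i => if i \in [set l1; l2] then nuC else 0].

Lemma mem_Sigma_leaf (T : tree) (i : leaf) : [set i] \in Sigma T.
Proof. by rewrite mem_cat map_f ?mem_enum ?orbT. Qed.

Lemma JC_map_labelling0 (T : tree) (a : Defs.split -> grp -> CC) :
  JC_map T a labelling0 = \prod_(e <- Sigma T) a e 0.
Proof.
have sum0 (P : pred leaf) : \sum_(i | P i) labelling0 i = 0.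
  by apply: big1 => i _; rewrite ffunE.
by rewrite ffunE sum0 eqxx; under eq_bigr do rewrite sum0.
Qed.

Lemma JC_map_CCAAA (T : tree) (a : Defs.split -> grp -> CC) :
  JC_map T a labelling_CCAAA = \prod_(e <- Sigma T) a e (\sum_(i in e) labelling_CCAAA i).
Proof.
rewrite ffunE.
have -> : \sum_i labelling_CCAAA i = 0.
  by rewrite !big_ord_recl big_ord0 !ffunE !inE; apply/eqP.
by rewrite eqxx.
Qed.

Lemma V_has_two_points (T : tree) : has_two_points (V T).
Proof.
set w1 := JC_map T unit_params; set w2 := JC_map T delta0_params.
have w1_0 : w1 labelling0 = 1 by rewrite JC_map_labelling0 big1.
have w2_0 : w2 labelling0 = 1 by rewrite JC_map_labelling0 big1.
have w1_CCAAA : w1 labelling_CCAAA = 1 by rewrite JC_map_CCAAA big1.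
have w2_CCAAA : w2 labelling_CCAAA = 0.
  rewrite JC_map_CCAAA; apply/eqP; rewrite prodf_seq_eq0; apply/hasP.
  by exists [set l1]; rewrite ?mem_Sigma_leaf // big_set1 ffunE !inE eqxx /= /delta0_params.
have neq0 (w : point) : w labelling0 = 1 -> w != 0.
  by apply: contra_eq_neq => ->; rewrite ffunE eq_sym oner_neq0.
exists w1, w2; split; [exact: V_JC_map (neq0 _ w1_0) | exact: V_JC_map (neq0 _ w2_0)
                      | exact: neq0 | ].
move=> c; apply/eqP => w21.
have w21_at g : w2 g = c * w1 g by rewrite w21 ffunE.
have c1 : c = 1 by move: w2_0; rewrite w21_at w1_0 mulr1.
by move: w2_CCAAA; rewrite w21_at w1_CCAAA c1 mulr1 => /eqP; rewrite oner_eq0.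
Qed.

Lemma JC_params_split (a : Defs.split -> grp -> CC) (e : Defs.split) (h : grp) :
  JC_params a -> a e h = a e nuC + (h == 0)%:R * (a e 0 - a e nuC).
Proof.
case/(_ e) => aCG aGT.
have [-> | h_neq0] := eqVneq h 0; first by rewrite mul1r addrC subrK.
rewrite mul0r addr0.
case: h h_neq0 => -[[|[|m]] ?] -[[|[|m']] ?] //= _;
  [| rewrite aCG | rewrite aCG aGT];
  by congr (a e (_, _)); apply: val_inj.
Qed.

Lemma JC_map_pair (e1 e2 : Defs.split) (a : Defs.split -> grp -> CC) (g : labelling) :
  JC_map [:: e1; e2] a g =
    if \sum_i g i == 0
    then a e1 (\sum_(i in e1) g i) * a e2 (\sum_(i in e2) g i) *
         \prod_(i : leaf) a [set i] (g i)
    else 0.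
Proof.
rewrite ffunE /Sigma big_cat /= !big_cons big_nil mulr1 big_map big_enum /=.
by congr (if _ then _ * _ else _); apply: eq_bigr => i _; rewrite big_set1.
Qed.

Lemma set1_eqF_card (i : leaf) (e : Defs.split) : (1 < #|e|)%N -> ([set i] == e) = false.
Proof. by move=> e_gt1; apply/negbTE; apply: contraTneq e_gt1 => <-; rewrite cards1. Qed.

Section SplitDecomposition.

Variables (S X Y Z : Defs.split) (k : leaf).
Hypotheses (defS : S = k |: X) (kX : k \notin X) (SY : S != Y) (ZX : Z != X).
Hypotheses (X_gt1 : (1 < #|X|)%N) (Y_gt1 : (1 < #|Y|)%N) (Z_gt1 : (1 < #|Z|)%N).

Definition params_swap (a : Defs.split -> grp -> CC) : Defs.split -> grp -> CC :=
  fun e h => if e == Y then a X nuC else a e h.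

Definition params_absorb (a : Defs.split -> grp -> CC) : Defs.split -> grp -> CC :=
  fun e h =>
    if e == X then (h == 0)%:R * (a X 0 - a X nuC)
    else if e == Z then 1
    else if e == [set k] then a e h * a S h
    else a e h.

Lemma JC_params_swap a : JC_params a -> JC_params (params_swap a).
Proof. by move=> ja e; rewrite /params_swap; case: ifP => _; last exact: ja. Qed.

Lemma JC_params_absorb a : JC_params a -> JC_params (params_absorb a).
Proof.
move=> ja e; rewrite /params_absorb.
case: ifP => _; first by [].
case: ifP => _; first by [].
case: ifP => _; last exact: ja.
by case: (ja e) => -> ->; case: (ja S) => -> ->.
Qed.

Lemma JC_map_swap_absorb a : JC_params a ->
  JC_map [:: S; X] a = JC_map [:: Y; S] (params_swap a) + JC_map [:: X; Z] (params_absorb a).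
Proof.
move=> ja; apply/ffunP => g; rewrite JC_map_pair [RHS]ffunE !JC_map_pair.
case: eqP => _; last by rewrite addr0.
set P := \prod_(i : leaf) a [set i] (g i).
have leaves_swap : \prod_(i : leaf) params_swap a [set i] (g i) = P.
  by apply: eq_bigr => i _; rewrite /params_swap set1_eqF_card.
have leaves_absorb : \prod_(i : leaf) params_absorb a [set i] (g i) = P * a S (g k).
  rewrite /P (bigD1 k) //= [in RHS](bigD1 k) //= mulrAC; congr (_ * _).
    by rewrite /params_absorb (set1_eqF_card k X_gt1) (set1_eqF_card k Z_gt1) eqxx.
  apply: eq_bigr => i ik.
  rewrite /params_absorb (set1_eqF_card i X_gt1) (set1_eqF_card i Z_gt1).
  by rewrite (inj_eq set1_inj) (negbTE ik).
rewrite leaves_swap leaves_absorb /params_swap /params_absorb eqxx (negbTE SY).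
rewrite eqxx (negbTE ZX) eqxx.
have -> : \sum_(i in S) g i = g k + \sum_(i in X) g i by rewrite defS big_setU1.
rewrite [a X _](JC_params_split _ _ ja).
by case: eqP => [-> | _]; rewrite ?addr0 /=; ring.
Qed.

End SplitDecomposition.

Theorem theorem5 : forall x : point, V T3 x -> join (V T1) (V T2) x.
Proof.
have defS : [set l1; l2; l3] = l2 |: [set l1; l3].
  by apply/setP => i; rewrite !inE -orbA orbCA.
have kX : l2 \notin [set l1; l3] by rewrite !inE.
have SY : [set l1; l2; l3] != [set l1; l2] by apply/eqP => /setP /(_ l3); rewrite !inE.
have ZX : [set l1; l3; l4] != [set l1; l3] by apply/eqP => /setP /(_ l4); rewrite !inE.
have X_gt1 : (1 < #|[set l1; l3]|)%N by rewrite cards2.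
have Y_gt1 : (1 < #|[set l1; l2]|)%N by rewrite cards2.
have Z_gt1 : (1 < #|[set l1; l3; l4]|)%N.
  exact: leq_trans X_gt1 (subset_leq_card (subsetUl _ _)).
move=> x; apply: proj_closure_trans => _ [a [ja ->]] y_neq0.
have decomp := JC_map_swap_absorb defS kX SY ZX X_gt1 Y_gt1 Z_gt1 ja.
rewrite /T3 decomp in y_neq0 *; apply: mem_proj_closure => //.
apply: lines_union_add (V_has_two_points _) (V_has_two_points _) _ _ y_neq0.
- by apply: (@V_JC_map T1); apply: JC_params_swap.
- by apply: (@V_JC_map T2); apply: JC_params_absorb.
Qed.
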